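(* Let $k$ be a positive integer and let $G$ be a graph obtained from $K_4$ by subdividing its edges (each edge replaced by a path) such that, in a planar embedding of $G$, each of the four faces is a cycle of length $2k+1$. Then $G^{(2k-1)}$ is isomorphic to the complete graph $K_{4k}$.
   Context: For a graph $G$ and a positive integer $m$, the $m$-th walk-power $G^{(m)}$ is the graph with vertex set $V(G)$ in which two distinct vertices $x,y$ are adjacent if and only if there is a walk of length exactly $m$ in $G$ connecting $x$ and $y$. *)

From mathcomp Require Import all_boot.
Set Implicit Arguments. Unset Strict Implicit. Unset Printing Implicit Defensive.

Definition has_walk (T : eqType) (e : rel T) (m : nat) (x y : T) : Prop :=
  exists p : seq T, [/\ size p = m, path e x p & last x p = y].

Definition walk_power (T : eqType) (e : rel T) (m : nat) (x y : T) : Prop :=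
  x != y /\ has_walk e m x y.

(* Subdivision of K4 on branch vertices 'I_4: the edge {i,j} (i < j) is
   replaced by a path of length l i j (only values with i < j are used). *)
Definition K4edge := {p : 'I_4 * 'I_4 | p.1 < p.2}.

(* vertices: the 4 branch vertices, and for each edge ij the l ij - 1
   internal vertices (internal vertex t sits at position t+1 on the path). *)
Definition subK4_vert (l : 'I_4 -> 'I_4 -> nat) : finType :=
  ('I_4 + {ij : K4edge & 'I_(l (val ij).1 (val ij).2).-1})%type.

Definition on_edge (l : 'I_4 -> 'I_4 -> nat) (ij : K4edge) (s : nat)
  (v : subK4_vert l) : bool :=
  match v with
  | inl b => ((s == 0) && (b == (val ij).1)) ||
             ((s == l (val ij).1 (val ij).2) && (b == (val ij).2))
  | inr (existT ij' t) => (ij' == ij) && (s == (val t).+1)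
  end.

Definition subK4_adj (l : 'I_4 -> 'I_4 -> nat) : rel (subK4_vert l) :=
  fun u v => [exists ij : K4edge, exists s : 'I_(l (val ij).1 (val ij).2),
     (on_edge ij s u && on_edge ij s.+1 v) ||
     (on_edge ij s v && on_edge ij s.+1 u)].

From mathcomp Require Import all_boot zify.
Set Implicit Arguments. Unset Strict Implicit. Unset Printing Implicit Defensive.

(* Walks can be lengthened by 2 by stepping back and forth, so it suffices to
   join any two distinct vertices by a walk of odd length at most 2k-1.  Every
   vertex lies on a branch path, at distances d1 + d2 = (path length) from its
   two ends.  If two vertices lie on a common face, the two arcs of that
   (2k+1)-cycle between them have lengths summing to 2k+1, so one arc is odd
   and, the vertices being distinct, of length at most 2k-1.  Otherwise they
   lie on opposite branch paths.  The face equations force opposite branch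
   paths to have equal lengths; of the four walks through the connecting branch
   paths, two have odd lengths summing to at most 4k, so one has length at most
   2k-1.  Finally each branch path lies on two faces, so there are
   4 + 2(2k+1) - 6 = 4k vertices. *)

Section Walks.
Variables (T : eqType) (e : rel T).

Lemma has_walk0 x : has_walk e 0 x x.
Proof. by exists [::]. Qed.

Lemma has_walk0_eq x y : has_walk e 0 x y -> x = y.
Proof. by case=> -[|? ?] []. Qed.

Lemma has_walk1 x y : e x y -> has_walk e 1 x y.
Proof. by move=> exy; exists [:: y]; rewrite /= exy. Qed.

Lemma has_walk_cat m n x y z :
  has_walk e m x y -> has_walk e n y z -> has_walk e (m + n) x z.
Proof.
move=> [p [<- pp <-]] [q [<- pq <-]]; exists (p ++ q).
by rewrite size_cat cat_path last_cat pp pq.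
Qed.

Lemma has_walk_seq (c : nat -> T) n :
    (forall p, p < n -> e (c p) (c p.+1)) ->
  forall p q, p <= q <= n -> has_walk e (q - p) (c p) (c q).
Proof.
move=> ec p; elim=> [|q IHq] /andP[pq qn].
  by move: pq; rewrite leqn0 => /eqP->; apply: has_walk0.
case: (ltnP q p) => [qp | pq'].
  have -> : p = q.+1 by lia.
  by rewrite subnn; apply: has_walk0.
rewrite subSn // -addn1; apply: has_walk_cat (IHq _) (has_walk1 (ec _ _)); lia.
Qed.

Hypothesis e_sym : symmetric e.

Lemma has_walk_sym m x y : has_walk e m x y -> has_walk e m y x.
Proof.
elim: m x => [|m IHm] x; first by move/has_walk0_eq->; apply: has_walk0.
case=> -[|z p] [//= [sp] /andP[exz pzp] lp].
rewrite -addn1; apply: has_walk_cat (IHm z _) (has_walk1 _); first by exists p.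
by rewrite e_sym.
Qed.

Lemma has_walkSS m x y : has_walk e m.+1 x y -> has_walk e m.+3 x y.
Proof.
case=> -[|z p] [//= sp /andP[exz pzp] lp].
by exists [:: z, x, z & p]; rewrite /= sp exz e_sym exz pzp.
Qed.

Lemma has_walk_odd_le m n x y :
  has_walk e m x y -> odd m -> odd n -> m <= n -> has_walk e n x y.
Proof.
move=> W om on mn; have -> : n = m + ((n - m) %/ 2).*2 by lia.
elim: (_ %/ 2) => [|j IHj]; first by rewrite addn0.
case: m om W IHj {mn} => // m _ _ IHj.
have -> : m.+1 + j.+1.*2 = (m + j.*2).+3 by lia.
by apply: has_walkSS; rewrite -addSn.
Qed.

Lemma has_walk_odd_sum k m n x y : x != y -> m + n = (2 * k).+1 ->
  has_walk e m x y -> has_walk e n x y -> has_walk e (2 * k - 1) x y.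
Proof.
wlog om : m n / odd m.
  move=> W neq mn Wm Wn; case: (boolP (odd m)) => om; first exact: W Wm Wn.
  by apply: W Wn Wm => //; lia.
move=> neq mn Wm; case: n mn => [|n] mn Wn.
  by case/eqP: neq; apply: has_walk0_eq.
apply: (has_walk_odd_le Wm) => //; lia.
Qed.

Lemma has_walk_odd_pair k m n x y : odd m -> odd n -> m + n <= 4 * k ->
  has_walk e m x y -> has_walk e n x y -> has_walk e (2 * k - 1) x y.
Proof.
wlog mn : m n / m <= n.
  move=> W om on le Wm Wn; case: (leqP m n) => mn; first exact: W mn om on le Wm Wn.
  by apply: (W n m) => //; lia.
move=> om on le Wm _; apply: (has_walk_odd_le Wm) => //; lia.
Qed.

End Walks.

Lemma has_walk_homo (T V : eqType) (e : rel T) (a : rel V) (g : V -> T) :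
  {homo g : u v / a u v >-> e u v} ->
  forall m u v, has_walk a m u v -> has_walk e m (g u) (g v).
Proof.
move=> hg m u v [p [sp pp <-]]; exists (map g p).
by rewrite size_map last_map (homo_path hg).
Qed.

Lemma exists_other n (i j : 'I_n.+3) : exists m : 'I_n.+3, (m != i) && (m != j).
Proof.
have : 0 < #|~: [set i; j]|.
  by have := cardsC [set i; j]; rewrite cards2 card_ord; case: (i != j) => /=; lia.
by case/card_gt0P => m; rewrite !inE negb_or; exists m.
Qed.

Section SubdividedK4.
Variable l : 'I_4 -> 'I_4 -> nat.
Local Notation V := (subK4_vert l).
Local Notation adj := (@subK4_adj l).

Definition edge_len (X : K4edge) := l (val X).1 (val X).2.

(* Positions beyond the end of the path are sent to its last branch vertex. *)
Definition edge_vert (X : K4edge) (s : nat) : V :=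
  if s is s'.+1 then
    if insub s' : option 'I_(edge_len X).-1 is Some t then inr (existT _ X t)
    else inl (val X).2
  else inl (val X).1.

Lemma subK4_adj_sym : symmetric adj.
Proof.
by move=> u v; apply/existsP/existsP => -[X /existsP[s uv]];
  exists X; apply/existsP; exists s; rewrite orbC.
Qed.

Lemma edge_vert_len X : 0 < edge_len X -> edge_vert X (edge_len X) = inl (val X).2.
Proof.
move=> X_gt0; rewrite -(prednK X_gt0) /=.
by case: insubP => // t; rewrite ltnn.
Qed.

Lemma on_edge_vert X s : 0 < edge_len X -> s <= edge_len X -> on_edge X s (edge_vert X s).
Proof.
case: s => [|s] X_gt0 sX /=; first by rewrite !eqxx.
case: insubP => [t _ <- | /negbTE t_ge] /=; first by rewrite !eqxx.
by rewrite eqxx andbT; apply/eqP; rewrite -/(edge_len X); lia.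
Qed.

Lemma subK4_adj_edge_vert X s : 0 < edge_len X -> s < edge_len X ->
  adj (edge_vert X s) (edge_vert X s.+1).
Proof.
move=> X_gt0 sX; apply/existsP; exists X; apply/existsP; exists (Ordinal sX).
by rewrite !on_edge_vert // ltnW.
Qed.

Lemma has_walk_edge_vert X s t : 0 < edge_len X -> s <= t <= edge_len X ->
  has_walk adj (t - s) (edge_vert X s) (edge_vert X t).
Proof. by move=> X_gt0; apply: has_walk_seq => p; apply: subK4_adj_edge_vert. Qed.

Hypothesis l_gt0 : forall i j : 'I_4, i < j -> 0 < l i j.

Lemma edge_len_gt0 X : 0 < edge_len X.
Proof. exact: l_gt0 (valP X). Qed.

Lemma has_walk_edge_vert_fst X s : s <= edge_len X ->
  has_walk adj s (edge_vert X s) (inl (val X).1).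
Proof.
move=> sX; apply: (has_walk_sym subK4_adj_sym).
by have := @has_walk_edge_vert X 0 s (edge_len_gt0 X); rewrite subn0 sX; apply.
Qed.

Lemma has_walk_edge_vert_snd X s : s <= edge_len X ->
  has_walk adj (edge_len X - s) (edge_vert X s) (inl (val X).2).
Proof.
move=> sX; rewrite -edge_vert_len ?edge_len_gt0 //.
by apply: has_walk_edge_vert (edge_len_gt0 X) _; rewrite sX leqnn.
Qed.

Lemma edge_vert_surj u : exists X s, s <= edge_len X /\ u = edge_vert X s.
Proof.
case: u => [b | [X t]]; last first.
  exists X, t.+1; rewrite /= valK; split=> //.
  case: t => t /= tX; have : t < (edge_len X).-1 := tX.
  by have := edge_len_gt0 X; lia.
have [m /andP[mb _]] := exists_other b b.
case: (ltngtP b m) => [bm | mb' | /val_inj eq_bm]; last by rewrite eq_bm eqxx in mb.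
  by exists (exist _ (b, m) bm), 0.
exists (exist _ (m, b) mb'), (edge_len (exist _ (m, b) mb')).
by rewrite edge_vert_len ?edge_len_gt0.
Qed.

Definition branch_len (i j : 'I_4) := if i < j then l i j else l j i.

Lemma branch_lenC i j : branch_len i j = branch_len j i.
Proof. by rewrite /branch_len; case: ltngtP => // /val_inj->. Qed.

Lemma branch_len_edge X : branch_len (val X).1 (val X).2 = edge_len X.
Proof. by rewrite /branch_len (valP X). Qed.

Lemma branch_len_gt0 (i j : 'I_4) : i != j -> 0 < branch_len i j.
Proof.
rewrite /branch_len => neq.
case: (ltngtP i j) => [|ij|/val_inj eq]; [exact: l_gt0 | exact: l_gt0 |].
by rewrite eq eqxx in neq.
Qed.

Lemma has_walk_branch i j : i != j -> has_walk adj (branch_len i j) (inl i) (inl j).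
Proof.
wlog ij : i j / i < j.
  move=> W neq; case: (ltngtP i j) => [ij | ji | /val_inj eq]; first exact: W.
    rewrite branch_lenC; apply: (has_walk_sym subK4_adj_sym).
    by apply: W ji _; rewrite eq_sym.
  by rewrite eq eqxx in neq.
pose X : K4edge := exist _ (i, j) ij.
move=> _; have := has_walk_edge_vert_snd (leq0n (edge_len X)).
by rewrite subn0 -branch_len_edge.
Qed.

Definition on_branch (u : V) (a b : 'I_4) : Prop :=
  exists d1 d2, [/\ d1 + d2 = branch_len a b,
    has_walk adj d1 u (inl a) & has_walk adj d2 u (inl b)].

Lemma on_branchC u a b : on_branch u a b -> on_branch u b a.
Proof. by case=> d1 [d2 [d12 ua ub]]; exists d2, d1; rewrite addnC branch_lenC. Qed.

Lemma on_branch_edge_vert X s : s <= edge_len X ->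
  on_branch (edge_vert X s) (val X).1 (val X).2.
Proof.
move=> sX; exists s, (edge_len X - s); split; last 2 first.
- exact: has_walk_edge_vert_fst.
- exact: has_walk_edge_vert_snd.
by rewrite branch_len_edge subnKC.
Qed.

Variable k : nat.
Hypothesis face_len : forall i j m : 'I_4, i < j -> j < m ->
  l i j + l j m + l i m = 2 * k + 1.

Lemma branch_len_lt (i j : 'I_4) : i < j -> branch_len i j = l i j.
Proof. by rewrite /branch_len => ->. Qed.

Lemma branch_len_gt (i j : 'I_4) : j < i -> branch_len i j = l j i.
Proof. by rewrite branch_lenC => /branch_len_lt. Qed.

Lemma branch_len_face (i j m : 'I_4) : i != j -> j != m -> i != m ->
  branch_len i j + branch_len j m + branch_len i m = (2 * k).+1.
Proof.
wlog ij : i j m / i < j.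
  move=> W neq_ij jm im; case: (ltngtP i j) => [ij | ji | /val_inj eq]; first exact: W.
    by rewrite branch_lenC -(W j i m) // 1?eq_sym // branch_lenC; lia.
  by rewrite eq eqxx in neq_ij.
move=> _ jm im; rewrite branch_len_lt // -addn1.
case: (ltngtP j m) => [jm' | mj | /val_inj eq]; last by rewrite eq eqxx in jm.
  by rewrite !branch_len_lt ?(ltn_trans ij jm') // face_len.
rewrite branch_len_gt //; case: (ltngtP i m) => [im' | mi | /val_inj eq].
- by rewrite branch_len_lt // -(face_len im' mj); lia.
- by rewrite branch_len_gt // -(face_len mi ij); lia.
- by rewrite eq eqxx in im.
Qed.

Lemma same_edge_walk X s t : s <= edge_len X -> t <= edge_len X ->
  edge_vert X s != edge_vert X t ->
  has_walk adj (2 * k - 1) (edge_vert X s) (edge_vert X t).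
Proof.
wlog st : s t / s <= t.
  move=> W sX tX neq; case: (leqP s t) => [st | ts]; first exact: W.
  by apply: (has_walk_sym subK4_adj_sym); apply: W => //; [exact: ltnW | rewrite eq_sym].
move=> sX tX neq.
have direct := has_walk_edge_vert (edge_len_gt0 X) (introT andP (conj st tX)).
have [m /andP[mx1 mx2]] := exists_other (val X).1 (val X).2.
rewrite eq_sym in mx1.
have around := has_walk_cat (has_walk_cat (has_walk_cat
  (has_walk_edge_vert_fst sX) (has_walk_branch mx1)) (has_walk_branch mx2))
  (has_walk_sym subK4_adj_sym (has_walk_edge_vert_snd tX)).
apply: (has_walk_odd_sum subK4_adj_sym neq _ direct around).
have x12 : (val X).1 != (val X).2 by apply/negbT/ltn_eqF/(valP X).
have := branch_len_face mx1 mx2 x12; rewrite branch_len_edge; lia.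
Qed.

Lemma triangle_walk (a w b : 'I_4) u v :
  on_branch u w a -> on_branch v w b -> u != v -> a != w -> w != b -> a != b ->
  has_walk adj (2 * k - 1) u v.
Proof.
move=> [d1 [d2 [d12 uw ua]]] [e1 [e2 [e12 vw vb]]] neq aw wb ab.
have sym := has_walk_sym subK4_adj_sym.
have via_w := has_walk_cat uw (sym _ _ _ vw).
have via_ab := has_walk_cat (has_walk_cat ua (has_walk_branch ab)) (sym _ _ _ vb).
apply: (has_walk_odd_sum subK4_adj_sym neq _ via_w via_ab).
have := branch_len_face aw wb ab; rewrite branch_lenC in d12; lia.
Qed.

Lemma opposite_walk (a a' b b' : 'I_4) u v : uniq [:: a; a'; b; b'] ->
  on_branch u a a' -> on_branch v b b' -> has_walk adj (2 * k - 1) u v.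
Proof.
rewrite /= !inE !negb_or => /and4P[/and3P[aa' ab ab'] /andP[a'b a'b'] bb' _].
move=> [d1 [d2 [d12 ua ua']]] [e1 [e2 [e12 vb vb']]].
have via x y c d (xy : x != y) :
    has_walk adj c u (inl x) -> has_walk adj d v (inl y) ->
    has_walk adj (c + branch_len x y + d) u v.
  move=> ux vy; apply: has_walk_cat (has_walk_sym subK4_adj_sym vy).
  exact: has_walk_cat ux (has_walk_branch xy).
have F1 := branch_len_face aa' a'b ab; have F2 := branch_len_face aa' a'b' ab'.
have F3 := branch_len_face ab bb' ab'; have F4 := branch_len_face a'b bb' a'b'.
have pos_ab := branch_len_gt0 ab; have pos_a'b := branch_len_gt0 a'b.
case: (boolP (odd (d1 + branch_len a b + e1))) => odd_ab.
  by apply: (has_walk_odd_pair subK4_adj_sym _ _ _ (via _ _ _ _ ab ua vb)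
    (via _ _ _ _ a'b' ua' vb')); lia.
by apply: (has_walk_odd_pair subK4_adj_sym _ _ _ (via _ _ _ _ ab' ua vb')
  (via _ _ _ _ a'b ua' vb)); lia.
Qed.

Lemma branch_pair_walk (x1 x2 y1 y2 : 'I_4) u v :
  x1 < x2 -> y1 < y2 -> (x1, x2) != (y1, y2) ->
  on_branch u x1 x2 -> on_branch v y1 y2 -> u != v -> has_walk adj (2 * k - 1) u v.
Proof.
have ltn_neq (i j : 'I_4) : i < j -> i != j by move/ltn_eqF/negbT.
have gtn_neq (i j : 'I_4) : i < j -> j != i by move/gtn_eqF/negbT.
move=> x12 y12 neq_xy ux vy neq.
case: (eqVneq x1 y1) => [e11 | n11].
  rewrite -e11 xpair_eqE eqxx /= in vy y12 neq_xy.
  by apply: (triangle_walk ux vy neq); [exact: gtn_neq | exact: ltn_neq |].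
case: (eqVneq x1 y2) => [e12 | n12].
  rewrite -e12 in vy y12; apply: (triangle_walk ux (on_branchC vy) neq) => //.
    exact: gtn_neq.
  exact: gtn_neq (ltn_trans y12 x12).
case: (eqVneq x2 y1) => [e21 | n21].
  rewrite -e21 in vy y12; apply: (triangle_walk (on_branchC ux) vy neq).
  - exact: ltn_neq.
  - exact: ltn_neq.
  - exact: ltn_neq (ltn_trans x12 y12).
case: (eqVneq x2 y2) => [e22 | n22].
  rewrite -e22 in vy y12.
  by apply: (triangle_walk (on_branchC ux) (on_branchC vy) neq) => //; exact: ltn_neq.
apply: (opposite_walk _ ux vy).
by rewrite /= !inE !negb_or n11 n12 n21 n22 (ltn_neq _ _ x12) (ltn_neq _ _ y12).
Qed.

Lemma has_walk_subK4 u v : u != v -> has_walk adj (2 * k - 1) u v.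
Proof.
have [X [s [sX ->]]] := edge_vert_surj u; have [Y [t [tY ->]]] := edge_vert_surj v.
move=> neq; case: (eqVneq X Y) => [eq_XY | neq_XY].
  by rewrite -eq_XY in tY neq *; apply: same_edge_walk.
apply: (branch_pair_walk (valP X) (valP Y) _ (on_branch_edge_vert sX)
  (on_branch_edge_vert tY) neq).
by rewrite -!surjective_pairing (inj_eq val_inj).
Qed.

End SubdividedK4.

Definition o0 : 'I_4 := @Ordinal 4 0 isT.
Definition o1 : 'I_4 := @Ordinal 4 1 isT.
Definition o2 : 'I_4 := @Ordinal 4 2 isT.
Definition o3 : 'I_4 := @Ordinal 4 3 isT.
Definition E01 : K4edge := exist _ (o0, o1) isT.
Definition E02 : K4edge := exist _ (o0, o2) isT.
Definition E03 : K4edge := exist _ (o0, o3) isT.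
Definition E12 : K4edge := exist _ (o1, o2) isT.
Definition E13 : K4edge := exist _ (o1, o3) isT.
Definition E23 : K4edge := exist _ (o2, o3) isT.

Lemma enum_K4edge : perm_eq (enum {: K4edge}) [:: E01; E02; E03; E12; E13; E23].
Proof.
apply: uniq_perm => [||X]; rewrite ?enum_uniq // mem_enum.
case: X => [[[[|[|[|[|?]]]] ?] [[|[|[|[|?]]]] ?]] ?] //.
all: rewrite !inE; do ?[apply/orP; (by left; apply/eqP/val_inj) || right].
all: by apply/eqP/val_inj.
Qed.

Lemma card_subK4_vert (l : 'I_4 -> 'I_4 -> nat) k :
    (forall i j : 'I_4, i < j -> 0 < l i j) ->
    (forall i j m : 'I_4, i < j -> j < m -> l i j + l j m + l i m = 2 * k + 1) ->
  #|subK4_vert l| = 4 * k.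
Proof.
move=> l_gt0 face_len.
rewrite /subK4_vert card_sum card_ord card_tagged (perm_sumn (perm_map _ enum_K4edge)) /=.
rewrite !card_ord.
have := face_len o0 o1 o2 isT isT; have := face_len o0 o1 o3 isT isT.
have := face_len o0 o2 o3 isT isT; have := face_len o1 o2 o3 isT isT.
move: (edge_len_gt0 l_gt0 E01) (edge_len_gt0 l_gt0 E02) (edge_len_gt0 l_gt0 E03).
move: (edge_len_gt0 l_gt0 E12) (edge_len_gt0 l_gt0 E13) (edge_len_gt0 l_gt0 E23).
rewrite /edge_len /=; lia.
Qed.

Theorem lemma1 (k : nat) (hk : 0 < k) (l : 'I_4 -> 'I_4 -> nat)
  (hl : forall i j : 'I_4, i < j -> 0 < l i j)
  (hface : forall i j m : 'I_4, i < j -> j < m ->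
             l i j + l j m + l i m = 2 * k + 1)
  (T : finType) (e : rel T)
  (hiso : exists h : T -> subK4_vert l,
            bijective h /\ forall x y, e x y = @subK4_adj l (h x) (h y)) :
  exists f : T -> 'I_(4 * k),
    bijective f /\
    forall x y : T, walk_power e (2 * k - 1) x y <-> f x != f y.
Proof.
have [h [[g hK gK] h_adj]] := hiso.
have card_T : #|T| = 4 * k.
  by rewrite (bij_eq_card (Bijective hK gK)) (card_subK4_vert hl hface).
pose f x := cast_ord card_T (enum_rank x).
have f_bij : bijective f.
  by exists (fun i => enum_val (cast_ord (esym card_T) i)) => [x|i];
    rewrite /f ?cast_ordK ?enum_rankK ?enum_valK ?cast_ordKV.
have f_eq x y : (f x == f y) = (x == y) by apply: inj_eq; apply: bij_inj.
exists f; split=> // x y; rewrite f_eq; split=> [[] //| neq]; split=> //.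
have g_homo : {homo g : u v / subK4_adj u v >-> e u v} by move=> u v; rewrite h_adj !gK.
rewrite -(hK x) -(hK y); apply: has_walk_homo g_homo _ _ _ (has_walk_subK4 hl hface _).
by rewrite (inj_eq (can_inj hK)).
Qed.
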